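(* Let $0\le r\le n$, let $f$ be an $r$-truncated subexceedant function on $[n-r]$, choose an admissible placement of block-ends, and let $A\in\mathcal{A}_{n+1,r+1}$ be the resulting assemblée produced by the insertion algorithm described below. Let $w_\alpha=\#\{i\in[n-r]: f(i)=i+r+1\}$ (the number of inserted elements given weight $\alpha^{-1}$) and $w_\beta=\#\{i\in[n-r]: f(i)=1\}$ (the number of inserted elements given weight $\beta^{-1}$). Then $|\mathrm{lrs}(\rho(A))|=w_\alpha$ and $|\mathrm{rls}(\rho(A))|=w_\beta$.
   Context: An assemblée of size $(m,s)$ is a collection of $s$ nonempty, pairwise disjoint, linearly ordered sets (blocks) whose union is $\{1,\dots,m\}$; the last element of a block is its block-end. Blocks are listed in the canonical order in which block-ends decrease from left to right, and the assemblée is identified with the word obtained by concatenating its blocks (''left/right in $A$'' refers to this word). $\mathcal{A}_{m,s}$ is the set of assemblées of size $(m,s)$. For $A\in\mathcal{A}_{n+1,r+1}$ with block-ends $b_1>\dots>b_{r+1}$: $\mathrm{lrs}(A)$ is the set of elements $x>b_1$ of $A$ larger than every element $y>b_1$ to the right of $x$ in $A$; $\mathrm{rls}(A)$ is the set of elements $x<b_{r+1}$ of $A$ larger than every element $y<b_{r+1}$ to the left of $x$ in $A$. An $r$-truncated subexceedant function on $[n-r]=\{1,\dots,n-r\}$ is a function $f:[n-r]\to\mathbb{Z}_{>0}$ with $f(i)\le i+r+1$ for all $i$. Insertion algorithm. Start with $r+1$ ''green'' markers $g_1,\dots,g_{r+1}$ arranged vertically (in a linear ''height'' order, $g_1$ on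 top). For $i=1,\dots,n-r$ insert a new element $x_i$, placed horizontally to the right of $x_{i-1}$, into the current height order (which contains the $r+1$ green markers and $x_1,\dots,x_{i-1}$, i.e. $i+r$ items) at position $f(i)$ counted from the bottom: $f(i)=1$ means below all current items, $f(i)=k$ means directly above the $(k-1)$-st item from the bottom (so $f(i)=i+r+1$ means above all current items). At the end, every one of the $n+1$ items receives as value its rank in the height order (from $1$ at the bottom to $n+1$ at the top); write $x_i$ also for the value of $x_i$ and $b_1>\dots>b_{r+1}$ for the values of $g_1,\dots,g_{r+1}$. An admissible placement of block-ends is a way of merging the sequence $x_1,\dots,x_{n-r}$ with the sequence $b_1,\dots,b_{r+1}$ (keeping both orders) such that $b_{r+1}$ is the last letter; there are $\binom{n}{r}$ of them. Cutting the merged word after each $b_i$ gives an assemblée $A\in\mathcal{A}_{n+1,r+1}$ with block-ends $b_1,\dots,b_{r+1}$. The inserted element $x_i$ is given weight $\beta^{-1}$ if $f(i)=1$, weight $\alpha^{-1}$ if $f(i)=i+r+1$, and weight $1$ otherwise. The map $\rho$. For $A\in\mathcal{A}_{n+1,r+1}$ with block-ends $b_1>\dots>b_{r+1}$, let $[a_1,\dots,a_u]$ be the elements of $A$ greater than $b_1$, listed in their order of appearance in $A$ from left to right, and $[c_1,\dots,c_w]$ the elements smaller than $b_{r+1}$, in their order of appearance. $\rho(A)$ is the word obtained from $A$ by replacing $a_i$ (in its position) by $a_{u-i+1}$ for each $i$, replacing $c_i$ by $b_{r+1}-c_i$ for each $i$, and leaving all other entries unchanged; it is again an assemblée in $\mathcal{A}_{n+1,r+1}$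 with the same block-ends. *)

From mathcomp Require Import all_boot.
Set Implicit Arguments. Unset Strict Implicit. Unset Printing Implicit Defensive.

(** An assemblée is represented by the list of its blocks (each block a
    linearly ordered list of elements of {1..m}), in canonical order. *)
Definition assemblee := seq (seq nat).

Definition aword (A : assemblee) : seq nat := flatten A.

Definition block_ends (A : assemblee) : seq nat := [seq last 0 B | B <- A].
(** b_1 = largest block-end, b_{r+1} = smallest block-end *)
Definition bfirst (A : assemblee) : nat := foldr maxn 0 (block_ends A).
Definition blast (A : assemblee) : nat := foldr minn (bfirst A) (block_ends A).

Definition lrs (A : assemblee) : seq nat :=
  let w := aword A in let b1 := bfirst A in
  [seq nth 0 w i | i <- iota 0 (size w) &
     (b1 < nth 0 w i) &&
     all (fun y => (b1 < y) ==> (y < nth 0 w i)) (drop i.+1 w)].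

Definition rls (A : assemblee) : seq nat :=
  let w := aword A in let br := blast A in
  [seq nth 0 w i | i <- iota 0 (size w) &
     (nth 0 w i < br) &&
     all (fun y => (y < br) ==> (y < nth 0 w i)) (take i w)].

Fixpoint fill (P : pred nat) (s : seq nat) (w : seq nat) : seq nat :=
  match w with
  | [::] => [::]
  | x :: w' => if P x then head 0 s :: fill P (behead s) w' else x :: fill P s w'
  end.

Definition rho_word (w : seq nat) (b1 br : nat) : seq nat :=
  let a := [seq x <- w | b1 < x] in
  [seq (if x < br then br - x else x) | x <- fill (fun x => b1 < x) (rev a) w].

Definition rho (A : assemblee) : assemblee :=
  reshape (shape A) (rho_word (aword A) (bfirst A) (blast A)).

(** items of the height order: inl k = green marker g_k, inr i = inserted x_i *)
Definition item := (nat + nat)%type.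

Definition insert_at (s : seq item) (k : nat) (x : item) : seq item :=
  take k s ++ x :: drop k s.

(** height order, listed from bottom to top; x_i is inserted at position f(i)
    counted from the bottom (i.e. with f(i)-1 items below it) *)
Definition height_order (n r : nat) (f : nat -> nat) : seq item :=
  foldl (fun s i => insert_at s (f i).-1 (inr i))
        [seq inl k | k <- rev (iota 1 r.+1)] (iota 1 (n - r)).

(** value of an item = its rank in the final height order (1 at the bottom) *)
Definition ivalue (n r : nat) (f : nat -> nat) (it : item) : nat :=
  (index it (height_order n r f)).+1.

(** An admissible placement of block-ends is encoded by a boolean word p of
    length n+1: true = next block-end b_k, false = next inserted x_i; it has
    r+1 trues and its last letter is true (b_{r+1} is last). *)
Definition admissible (n r : nat) (p : seq bool) : bool :=
  [&& size p == n.+1, count id p == r.+1 & last false p].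

Fixpoint merge_word (p : seq bool) (i k : nat) : seq item :=
  match p with
  | [::] => [::]
  | true :: p' => inl k :: merge_word p' i k.+1
  | false :: p' => inr i :: merge_word p' i.+1 k
  end.

Definition is_green (it : item) : bool := if it is inl _ then true else false.

Fixpoint cut_after (T : Type) (P : T -> bool) (cur : seq T) (w : seq T) : seq (seq T) :=
  match w with
  | [::] => if cur is [::] then [::] else [:: cur]
  | x :: w' => if P x then rcons cur x :: cut_after P [::] w'
               else cut_after P (rcons cur x) w'
  end.

Definition insertion_assemblee (n r : nat) (f : nat -> nat) (p : seq bool) : assemblee :=
  [seq [seq ivalue n r f it | it <- B] | B <- cut_after is_green [::] (merge_word p 1 1)].

Definition trunc_subexc (n r : nat) (f : nat -> nat) : Prop :=
  forall i, 1 <= i <= n - r -> 0 < f i <= i + r + 1.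

Definition w_alpha (n r : nat) (f : nat -> nat) : nat :=
  count (fun i => f i == i + r + 1) (iota 1 (n - r)).
Definition w_beta (n r : nat) (f : nat -> nat) : nat :=
  count (fun i => f i == 1) (iota 1 (n - r)).

From mathcomp Require Import all_boot zify.
Set Implicit Arguments. Unset Strict Implicit. Unset Printing Implicit Defensive.

(* Insertion never changes the relative height of two items already present, so the
   final values of x_1, ..., x_j are ordered as in the height order at time j. Hence x_j
   ends up above every earlier item (equivalently: above b_1 and above every earlier x_i
   lying above b_1) exactly when f(j) = j+r+1, and below every earlier item exactly when
   f(j) = 1. So w_alpha counts the left-to-right maxima of the subword of elements above
   b_1, and w_beta the left-to-right minima of the subword of elements below b_{r+1}.
   The map rho fixes the block-ends, reverses the first subword and complements the
   second to b_{r+1}; this turns those records into the right-to-left maxima counted by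
   lrs and the left-to-right maxima counted by rls. *)

(** * Left-to-right records *)

Fixpoint nrecords (T : Type) (R : rel T) (pre s : seq T) : nat :=
  if s is x :: s' then all (R x) pre + nrecords R (rcons pre x) s' else 0.

Lemma nrecords_rcons (T : Type) (R : rel T) pre s x :
  nrecords R pre (rcons s x) = nrecords R pre s + all (R x) (pre ++ s).
Proof.
elim: s pre => /= [|y s IH] pre; first by rewrite cats0 addn0.
by rewrite IH cat_rcons addnA.
Qed.

Lemma nrecords_map_in (T U : Type) (D : pred T) (R : rel U) (R' : rel T)
    (g : T -> U) pre s :
  {in D &, forall x y, R (g x) (g y) = R' x y} -> all D pre -> all D s ->
  nrecords R (map g pre) (map g s) = nrecords R' pre s.
Proof.
move=> gR; elim: s pre => //= x s IH pre Dpre /andP [Dx Ds].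
rewrite -map_rcons IH ?all_rcons ?Dx //; congr (nat_of_bool _ + _).
by elim: pre Dpre => //= y pre IHp /andP [Dy /IHp ->]; rewrite gR.
Qed.

Lemma all_gt_max_filter (T : eqType) (v : T -> nat) (g x : T) (G X : seq T) :
  g \in G -> {in G, forall y, v y <= v g} ->
  (v g < v x) && all (fun y => v y < v x) [seq y <- X | v g < v y] =
  all (fun y => v y < v x) (G ++ X).
Proof.
move=> gG le_g; apply/andP/allP => [[lt_gx /allP above] y | above].
  rewrite mem_cat => /orP [yG|yX]; first by have := le_g y yG; lia.
  by case: (ltnP (v g) (v y)) => [lt_gy|]; [apply: above; rewrite mem_filter lt_gy|lia].
split; first by apply: above; rewrite mem_cat gG.
by apply/allP => y; rewrite mem_filter => /andP [_ yX]; apply: above; rewrite mem_cat yX orbT.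
Qed.

Lemma all_lt_min_filter (T : eqType) (v : T -> nat) (g x : T) (G X : seq T) :
  g \in G -> {in G, forall y, v g <= v y} ->
  (v x < v g) && all (fun y => v x < v y) [seq y <- X | v y < v g] =
  all (fun y => v x < v y) (G ++ X).
Proof.
move=> gG le_g; apply/andP/allP => [[lt_xg /allP below] y | below].
  rewrite mem_cat => /orP [yG|yX]; first by have := le_g y yG; lia.
  by case: (ltnP (v y) (v g)) => [lt_yg|]; [apply: below; rewrite mem_filter lt_yg|lia].
split; first by apply: below; rewrite mem_cat gG.
by apply/allP => y; rewrite mem_filter => /andP [_ yX]; apply: below; rewrite mem_cat yX orbT.
Qed.

Lemma count_left_records (P : pred nat) (R : rel nat) pre w :
  count (fun i => P (nth 0 w i) &&
                  all (fun y => P y ==> R (nth 0 w i) y) (pre ++ take i w))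
        (iota 0 (size w))
  = nrecords R (filter P pre) (filter P w).
Proof.
elim: w pre => //= x w IH pre.
rewrite cats0 -(addn0 1) iotaDl count_map.
under eq_count => i /= do rewrite -cat_rcons.
rewrite IH filter_rcons -all_filter.
by case: (P x).
Qed.

Lemma count_right_records (P : pred nat) (R : rel nat) w :
  count (fun i => P (nth 0 w i) &&
                  all (fun y => P y ==> R (nth 0 w i) y) (drop i.+1 w))
        (iota 0 (size w))
  = nrecords R [::] (rev (filter P w)).
Proof.
elim: w => //= x w IH.
rewrite -(addn0 1) iotaDl count_map drop0 -all_filter.
by case: (P x); rewrite /= IH // rev_cons nrecords_rcons all_rev addnC.
Qed.

Lemma size_lrs A :
  size (lrs A) = nrecords (fun x y => y < x) [::] (rev [seq x <- aword A | bfirst A < x]).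
Proof.
rewrite /lrs size_map size_filter.
exact: (count_right_records (fun x => bfirst A < x) (fun x y => y < x)).
Qed.

Lemma size_rls A :
  size (rls A) = nrecords (fun x y => y < x) [::] [seq x <- aword A | x < blast A].
Proof.
rewrite /rls size_map size_filter.
exact: (count_left_records (fun x => x < blast A) (fun x y => y < x) [::]).
Qed.

(** * The map rho *)

Lemma size_fill P s w : size (fill P s w) = size w.
Proof. by elim: w s => //= x w IH s; case: (P x); rewrite /= IH. Qed.

Lemma nth_fill_out P s w i : ~~ P (nth 0 w i) -> nth 0 (fill P s w) i = nth 0 w i.
Proof.
elim: w s i => [|x w IH] s [|i] //=; first by case: (P x) => //= ->.
by case: (P x) => /= /IH ->.
Qed.

Lemma filter_fill P s w : all P s -> size s = count P w -> filter P (fill P s w) = s.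
Proof.
elim: w s => [|x w IH] s /=; first by case: s.
case Px: (P x) => /=; last by move=> Ps Es; rewrite Px IH.
by case: s => //= y s /andP [Py Ps] [Es]; rewrite Py IH.
Qed.

Lemma filter_fill_out P (Q : pred nat) s w :
  {subset Q <= predC P} -> all P s -> size s = count P w ->
  filter Q (fill P s w) = filter Q w.
Proof.
move=> QP; have nQ y : P y -> Q y = false.
  by move=> Py; apply/negbTE/negP => /QP; rewrite inE /= Py.
elim: w s => [|x w IH] s /=; first by case: s.
case Px: (P x) => /=; last by move=> Ps Es; rewrite IH.
by case: s => //= y s /andP [Py Ps] [Es]; rewrite !nQ // IH.
Qed.

Section RhoWord.
Variables (w : seq nat) (b1 br : nat).
Hypothesis le_br_b1 : br <= b1.

Lemma filter_gt_rho_word :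
  [seq x <- rho_word w b1 br | b1 < x] = rev [seq x <- w | b1 < x].
Proof.
rewrite /rho_word filter_map.
rewrite (eq_filter (a2 := fun x => b1 < x)); last by move=> x /=; case: ifP; lia.
rewrite filter_fill ?all_rev ?filter_all ?size_rev ?size_filter //.
by apply: map_id_in => x; rewrite mem_rev mem_filter => /andP [+ _]; case: ifP; lia.
Qed.

Lemma filter_lt_rho_word :
  [seq x <- rho_word w b1 br | x < br] = [seq br - x | x <- w & 0 < x < br].
Proof.
rewrite /rho_word filter_map.
rewrite (eq_filter (a2 := fun x => 0 < x < br)); last by move=> x /=; case: ifP; lia.
rewrite filter_fill_out ?all_rev ?filter_all ?size_rev ?size_filter //.
  by apply/eq_in_map => x; rewrite mem_filter => /andP [/andP [_ ->] _].
by move=> x; rewrite !inE /=; lia.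
Qed.

Lemma nth_rho_word i :
  br <= nth 0 w i <= b1 -> nth 0 (rho_word w b1 br) i = nth 0 w i.
Proof.
move=> bounded; have [lt_i_w|le_w_i] := ltnP i (size w); last first.
  by rewrite !nth_default ?size_map ?size_fill.
rewrite /rho_word (nth_map 0) ?size_fill // nth_fill_out; last lia.
by case: ifP; lia.
Qed.

End RhoWord.

Lemma aword_rho A : aword (rho A) = rho_word (aword A) (bfirst A) (blast A).
Proof. by rewrite /rho /aword reshapeKr // size_map size_fill size_flatten. Qed.

Lemma foldr_maxn_ub s x : x \in s -> x <= foldr maxn 0 s.
Proof. by elim: s => //= y s IH; rewrite in_cons => /orP [/eqP ->|/IH]; lia. Qed.

Lemma foldr_maxn_lub s c : all (fun x => x <= c) s -> foldr maxn 0 s <= c.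
Proof. by elim: s => //= y s IH /andP [le_y /IH]; lia. Qed.

Lemma foldr_minn_lb s c x : x \in s -> foldr minn c s <= x.
Proof. by elim: s => //= y s IH; rewrite in_cons => /orP [/eqP ->|/IH]; lia. Qed.

Lemma foldr_minn_glb s c d : d <= c -> all (fun x => d <= x) s -> d <= foldr minn c s.
Proof. by move=> le_dc; elim: s => //= y s IH /andP [le_y /IH]; lia. Qed.

Lemma foldr_minn_le s c : foldr minn c s <= c.
Proof. by elim: s => //= y s IH; lia. Qed.

Lemma blast_le_bfirst A : blast A <= bfirst A.
Proof. exact: foldr_minn_le. Qed.

Lemma block_ends_bounded A : all (fun x => blast A <= x <= bfirst A) (block_ends A).
Proof. by apply/allP => x x_end; rewrite foldr_minn_lb // foldr_maxn_ub. Qed.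

Lemma last_take s k : 0 < k <= size s -> last 0 (take k s) = nth 0 s k.-1.
Proof.
case: k => // k /andP [_ lt_k_s].
by rewrite (last_nth 0) size_takel //= nth_take.
Qed.

Lemma block_ends_reshape (Q : pred nat) A t :
  [::] \notin A -> all Q (block_ends A) -> size t = size (aword A) ->
  (forall i, Q (nth 0 (aword A) i) -> nth 0 t i = nth 0 (aword A) i) ->
  block_ends (reshape (shape A) t) = block_ends A.
Proof.
rewrite /aword /block_ends; elim: A t => //= B A IH t.
rewrite in_cons negb_or => /andP [nB nA] /andP [QB QA] St Et.
have B_gt0 : 0 < size B by rewrite lt0n size_eq0 eq_sym.
have lastB : last 0 B = nth 0 (B ++ flatten A) (size B).-1.
  by rewrite -{1}(take_size B) last_take ?B_gt0 ?leqnn // nth_cat prednK // leqnn.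
congr (_ :: _).
  by rewrite last_take ?St ?size_cat ?leq_addr ?andbT ?addn_gt0 ?B_gt0 // lastB Et -?lastB.
apply: IH => //; first by rewrite size_drop St size_cat addKn.
by move=> i Qi; rewrite nth_drop Et nth_cat ltnNge leq_addr addKn.
Qed.

Lemma block_ends_rho A : [::] \notin A -> block_ends (rho A) = block_ends A.
Proof.
move=> nA; apply: (block_ends_reshape nA (block_ends_bounded A)).
  by rewrite size_map size_fill.
exact: nth_rho_word (blast_le_bfirst A).
Qed.

Lemma bfirst_rho A : [::] \notin A -> bfirst (rho A) = bfirst A.
Proof. by move=> nA; rewrite /bfirst block_ends_rho. Qed.

Lemma blast_rho A : [::] \notin A -> blast (rho A) = blast A.
Proof. by move=> nA; rewrite /blast bfirst_rho // block_ends_rho. Qed.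

Lemma size_lrs_rho A : [::] \notin A ->
  size (lrs (rho A)) = nrecords (fun x y => y < x) [::] [seq x <- aword A | bfirst A < x].
Proof.
move=> nA; rewrite size_lrs aword_rho bfirst_rho //.
by rewrite filter_gt_rho_word ?revK ?blast_le_bfirst.
Qed.

Lemma size_rls_rho A : [::] \notin A ->
  size (rls (rho A)) = nrecords (fun x y => x < y) [::] [seq x <- aword A | 0 < x < blast A].
Proof.
move=> nA; rewrite size_rls aword_rho blast_rho // filter_lt_rho_word ?blast_le_bfirst //.
apply: (@nrecords_map_in _ _ (fun x => 0 < x < blast A) _ _ (fun x => blast A - x) [::]).
- by move=> x y; rewrite !unfold_in /=; lia.
- by [].
- exact: filter_all.
Qed.

(** * The height order *)

Lemma perm_insert_at s k z : perm_eq (insert_at s k z) (z :: s).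
Proof. by rewrite /insert_at -cat1s perm_catCA cat_take_drop. Qed.

Lemma index_insert_at s k z x : k <= size s -> x != z ->
  index x (insert_at s k z) = index x s + (k <= index x s).
Proof.
move=> le_ks ne_xz; rewrite /insert_at -[in RHS](cat_take_drop k s).
rewrite !index_cat size_takel //.
case: ifP => [x_take|_]; last by rewrite /= eq_sym (negbTE ne_xz); lia.
by have := index_mem x (take k s); rewrite x_take size_takel //; lia.
Qed.

Lemma index_insert_at_new s k z : k <= size s -> z \notin s ->
  index z (insert_at s k z) = k.
Proof.
move=> le_ks z_s; rewrite /insert_at index_cat /= eqxx size_takel // addn0.
by case: ifP => // /mem_take; rewrite (negbTE z_s).
Qed.

Lemma insert_at_index_lt s k z x y : k <= size s -> x != z -> y != z ->
  (index x (insert_at s k z) < index y (insert_at s k z)) = (index x s < index y s).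
Proof. by move=> le_ks xz yz; rewrite !index_insert_at //; do 2 case: leqP; lia. Qed.

Lemma all_below_insert_at s k z : k <= size s -> uniq s -> z \notin s ->
  all (fun y => index y (insert_at s k z) < index z (insert_at s k z)) s = (k == size s).
Proof.
move=> le_ks uniq_s z_s; rewrite index_insert_at_new //.
rewrite (eq_in_all (a2 := fun y => index y s < k)); last first.
  move=> y y_s; rewrite index_insert_at //; first by case: leqP; lia.
  by apply: contraNneq z_s => <-.
apply/allP/eqP => [below | ->]; last by move=> y; rewrite index_mem.
apply/eqP; rewrite eqn_leq le_ks leqNgt; apply/negP => lt_ks.
by have := below _ (mem_nth (inl 0) lt_ks); rewrite index_uniq // ltnn.
Qed.

Lemma all_above_insert_at s k z : k <= size s -> z \notin s ->
  all (fun y => index z (insert_at s k z) < index y (insert_at s k z)) s = (k == 0).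
Proof.
move=> le_ks z_s; rewrite index_insert_at_new //.
rewrite (eq_in_all (a2 := fun y => k <= index y s)); last first.
  move=> y y_s; rewrite index_insert_at //; first by case: leqP; lia.
  by apply: contraNneq z_s => <-.
apply/allP/eqP => [above | -> //]; case: s le_ks above {z_s} => [|y s] /=; first lia.
by move=> _ /(_ y (mem_head y s)); rewrite eqxx; lia.
Qed.

Definition greens r : seq item := [seq inl l | l <- iota 1 r.+1].
Definition inserted j : seq item := [seq inr i | i <- iota 1 j].

(* [height_order n r f] unfolds to [heights r f (n - r)]. *)
Definition heights r (f : nat -> nat) j : seq item :=
  foldl (fun s i => insert_at s (f i).-1 (inr i))
        [seq inl k | k <- rev (iota 1 r.+1)] (iota 1 j).

Lemma mem_greens_first r : inl 1 \in greens r.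
Proof. by rewrite mem_map ?mem_iota //; apply: inl_inj. Qed.

Lemma mem_greens_last r : inl r.+1 \in greens r.
Proof. by rewrite mem_map ?mem_iota ?add1n ?ltnSn //; apply: inl_inj. Qed.

Lemma iota1_rcons j : iota 1 j.+1 = rcons (iota 1 j) j.+1.
Proof. by rewrite -[j.+1]addn1 iotaD cats1 add1n addn1. Qed.

Lemma inserted_succ j : inserted j.+1 = rcons (inserted j) (inr j.+1).
Proof. by rewrite /inserted (iota1_rcons j) map_rcons. Qed.

Lemma heights_succ r f j :
  heights r f j.+1 = insert_at (heights r f j) (f j.+1).-1 (inr j.+1).
Proof. by rewrite /heights (iota1_rcons j) foldl_rcons. Qed.

Lemma perm_heights r f j : perm_eq (heights r f j) (greens r ++ inserted j).
Proof.
elim: j => [|j IH]; first by rewrite cats0 /heights /= map_rev perm_rev.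
rewrite heights_succ inserted_succ (permPl (perm_insert_at _ _ _)) -cats1 catA.
by rewrite perm_sym perm_catC /= perm_cons perm_sym.
Qed.

Lemma mem_heights r f j x : (x \in heights r f j) =
  match x with inl l => 0 < l <= r.+1 | inr i => 0 < i <= j end.
Proof.
rewrite (perm_mem (perm_heights r f j)) mem_cat.
have inl_inserted l : inl l \in inserted j = false by apply/mapP => -[].
have inr_greens i : inr i \in greens r = false by apply/mapP => -[].
case: x => [l|i]; rewrite ?inl_inserted ?inr_greens ?orbF //= mem_map ?mem_iota ?add1n //.
  exact: inl_inj.
exact: inr_inj.
Qed.

Lemma uniq_heights r f j : uniq (heights r f j).
Proof.
rewrite (perm_uniq (perm_heights r f j)) cat_uniq.
rewrite !map_inj_uniq ?iota_uniq //=; [|exact: inr_inj|exact: inl_inj].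
by rewrite andbT; apply/hasPn => _ /mapP [i _ ->]; apply/mapP => -[].
Qed.

Lemma size_heights r f j : size (heights r f j) = j + r.+1.
Proof.
by rewrite (perm_size (perm_heights r f j)) size_cat !size_map !size_iota addnC.
Qed.

Lemma heights_subset r f j j' : j <= j' -> {subset heights r f j <= heights r f j'}.
Proof. by move=> le_jj' [l|i]; rewrite !mem_heights //; lia. Qed.

Lemma index_rev_iota r l : 0 < l <= r.+1 -> index l (rev (iota 1 r.+1)) = r.+1 - l.
Proof.
move=> bounded; have lt_size : r.+1 - l < size (rev (iota 1 r.+1)).
  by rewrite size_rev size_iota; lia.
have nth_l : nth 0 (rev (iota 1 r.+1)) (r.+1 - l) = l.
  rewrite nth_rev; last by rewrite size_iota; lia.
  by rewrite size_iota nth_iota; lia.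
by rewrite -{1}nth_l index_uniq // rev_uniq iota_uniq.
Qed.

Section Insertion.
Variables (n r : nat) (f : nat -> nat).
Hypothesis f_subexc : trunc_subexc n r f.
Local Notation m := (n - r).
Local Notation v := (ivalue n r f).

Lemma f_succ_bounds j : j < m -> 0 < f j.+1 <= j.+1 + r + 1.
Proof. by move=> lt_jm; apply: f_subexc; lia. Qed.

Lemma insert_pos_heights j : j < m -> (f j.+1).-1 <= size (heights r f j).
Proof. by move=> /f_succ_bounds; rewrite size_heights; lia. Qed.

Lemma new_notin_heights j : inr j.+1 \notin heights r f j.
Proof. by rewrite mem_heights; lia. Qed.

Lemma heights_index_lt j j' x y : j <= j' <= m ->
  x \in heights r f j -> y \in heights r f j ->
  (index x (heights r f j') < index y (heights r f j')) =
  (index x (heights r f j) < index y (heights r f j)).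
Proof.
move=> /andP [+ le_j'm] xj yj; elim: j' le_j'm => [|j' IH] le_j'm.
  by rewrite leqn0 => /eqP ->.
rewrite leq_eqVlt => /orP [/eqP -> //|lt_jj'].
have new_x : x != inr j'.+1.
  by apply: contraNneq (new_notin_heights j') => <-; apply: heights_subset xj.
have new_y : y != inr j'.+1.
  by apply: contraNneq (new_notin_heights j') => <-; apply: heights_subset yj.
by rewrite heights_succ insert_at_index_lt ?insert_pos_heights ?IH //; lia.
Qed.

Lemma ivalue_lt j x y : j <= m -> x \in heights r f j -> y \in heights r f j ->
  (v x < v y) = (index x (heights r f j) < index y (heights r f j)).
Proof. by move=> le_jm xj yj; rewrite -(heights_index_lt (j' := m)) ?le_jm ?leqnn. Qed.

Lemma ivalue_green_lt l l' : 0 < l < l' -> l' <= r.+1 -> v (inl l') < v (inl l).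
Proof.
move=> lt_ll' le_l'r.
rewrite (ivalue_lt (j := 0)) ?mem_heights //; [|lia..].
by rewrite /heights /= !(index_map inl_inj) !index_rev_iota; lia.
Qed.

Lemma ivalue_green_bounds y : y \in greens r -> v (inl r.+1) <= v y <= v (inl 1).
Proof.
case/mapP => l; rewrite mem_iota => bounded ->.
apply/andP; split; rewrite leq_eqVlt; apply/orP.
- have [->|ne_lr] := eqVneq l r.+1; first by left.
  by right; apply: ivalue_green_lt; lia.
- have [->|ne_l1] := eqVneq l 1; first by left.
  by right; apply: ivalue_green_lt; lia.
Qed.

Lemma ivalue_new_top j : j < m ->
  all (fun y => v y < v (inr j.+1)) (heights r f j) = (f j.+1 == j.+1 + r + 1).
Proof.
move=> lt_jm; have new_j1 : inr j.+1 \in heights r f j.+1 by rewrite mem_heights; lia.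
rewrite (eq_in_all (a2 := fun y =>
  index y (heights r f j.+1) < index (inr j.+1) (heights r f j.+1))); last first.
  by move=> y yj; apply: ivalue_lt => //; apply: heights_subset yj.
rewrite heights_succ all_below_insert_at
  ?insert_pos_heights ?uniq_heights ?new_notin_heights //.
have := f_succ_bounds lt_jm; rewrite size_heights.
by case: (f j.+1) => // k _; rewrite /= addn1 eqSS addSn addnS.
Qed.

Lemma ivalue_new_bottom j : j < m ->
  all (fun y => v (inr j.+1) < v y) (heights r f j) = (f j.+1 == 1).
Proof.
move=> lt_jm; have new_j1 : inr j.+1 \in heights r f j.+1 by rewrite mem_heights; lia.
rewrite (eq_in_all (a2 := fun y =>
  index (inr j.+1) (heights r f j.+1) < index y (heights r f j.+1))); last first.
  by move=> y yj; apply: ivalue_lt => //; apply: heights_subset yj.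
rewrite heights_succ all_above_insert_at ?insert_pos_heights ?new_notin_heights //.
by have := f_succ_bounds lt_jm; case: (f j.+1) => // k _.
Qed.

Lemma record_above_greens j : j < m ->
  (v (inl 1) < v (inr j.+1)) &&
    all (fun y => v y < v (inr j.+1)) [seq y <- inserted j | v (inl 1) < v y] =
  (f j.+1 == j.+1 + r + 1).
Proof.
move=> lt_jm; rewrite (@all_gt_max_filter _ _ _ _ (greens r)).
- by rewrite -(eq_all_r (perm_mem (perm_heights r f j))) ivalue_new_top.
- exact: mem_greens_first.
- by move=> y /ivalue_green_bounds /andP [].
Qed.

Lemma record_below_greens j : j < m ->
  (v (inr j.+1) < v (inl r.+1)) &&
    all (fun y => v (inr j.+1) < v y) [seq y <- inserted j | v y < v (inl r.+1)] =
  (f j.+1 == 1).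
Proof.
move=> lt_jm; rewrite (@all_lt_min_filter _ _ _ _ (greens r)).
- by rewrite -(eq_all_r (perm_mem (perm_heights r f j))) ivalue_new_bottom.
- exact: mem_greens_last.
- by move=> y /ivalue_green_bounds /andP [].
Qed.

Lemma nrecords_inserted (P : pred item) (R : rel nat) (c : pred nat) :
  (forall j, j < m ->
     P (inr j.+1) && all (fun y => R (v (inr j.+1)) (v y)) [seq y <- inserted j | P y] =
     c j.+1) ->
  forall j, j <= m -> nrecords R [::] [seq v y | y <- inserted j & P y] = count c (iota 1 j).
Proof.
move=> step; elim=> // j IH lt_jm.
rewrite inserted_succ filter_rcons (iota1_rcons j) -[rcons (iota 1 j) _]cats1 count_cat.
rewrite [count _ [:: _]]/= addn0.
rewrite -IH ?(ltnW lt_jm) // -(step j lt_jm).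
case: (P (inr j.+1)) => /=; last by rewrite addn0.
by rewrite map_rcons nrecords_rcons all_map.
Qed.

End Insertion.

(** * The assemblée built by the insertion algorithm *)

Lemma flatten_cut_after (T : Type) (P : pred T) cur w :
  flatten (cut_after P cur w) = cur ++ w.
Proof.
elim: w cur => [|x w IH] cur /=; first by case: cur => //= y cur; rewrite cats0.
by case: (P x); rewrite /= ?IH cat_rcons.
Qed.

Lemma cut_after_nonempty (T : eqType) (P : pred T) cur w : [::] \notin cut_after P cur w.
Proof.
elim: w cur => [|x w IH] cur /=; first by case: cur.
by case: (P x); rewrite ?in_cons (negbTE (IH _)) // orbF eq_sym -size_eq0 size_rcons.
Qed.

Lemma last_cut_after (T : Type) (P : pred T) x0 cur w x : P x ->
  [seq last x0 B | B <- cut_after P cur (rcons w x)] = filter P (rcons w x).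
Proof.
move=> Px; elim: w cur => [|y w IH] cur /=; first by rewrite Px /= last_rcons.
by case: (P y); rewrite /= IH ?last_rcons.
Qed.

Lemma merge_word_rcons p i k :
  merge_word (rcons p true) i k = rcons (merge_word p i k) (inl (k + count id p)).
Proof.
elim: p i k => [|b p IH] i k /=; first by rewrite addn0.
by case: b; rewrite IH //= addnS addSn.
Qed.

Lemma filter_green_merge_word p i k :
  filter is_green (merge_word p i k) = [seq inl l | l <- iota k (count id p)].
Proof. by elim: p i k => [|[] p IH] i k //=; rewrite IH. Qed.

Lemma filter_not_green_merge_word p i k :
  filter (predC is_green) (merge_word p i k) = [seq inr l | l <- iota i (count negb p)].
Proof. by elim: p i k => [|[] p IH] i k //=; rewrite IH. Qed.

Section InsertionAssemblee.
Variables (n r : nat) (f : nat -> nat) (p : seq bool).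
Hypothesis f_subexc : trunc_subexc n r f.
Hypothesis p_adm : admissible n r p.
Local Notation m := (n - r).
Local Notation v := (ivalue n r f).
Local Notation W := (merge_word p 1 1).
Local Notation A := (insertion_assemblee n r f p).

Lemma count_id_admissible : count id p = r.+1.
Proof. by case/and3P: p_adm => _ /eqP. Qed.

Lemma count_negb_admissible : count negb p = m.
Proof.
case/and3P: p_adm => /eqP size_p _ _; have := count_predC id p.
by rewrite size_p count_id_admissible (eq_count (a2 := negb)) //; lia.
Qed.

Lemma insertion_word_rcons : exists w, W = rcons w (inl r.+1).
Proof.
move: p_adm count_id_admissible; case/lastP: p => [|q b] /and3P [_ _] //.
rewrite last_rcons => -> count_q; exists (merge_word q 1 1).
by rewrite merge_word_rcons; move: count_q; rewrite -cats1 count_cat addn1 => -[->].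
Qed.

Lemma filter_insertion_word (P : pred item) :
  {in greens r, forall y, ~~ P y} -> filter P W = filter P (inserted m).
Proof.
move=> not_P; rewrite /inserted -count_negb_admissible.
rewrite -(filter_not_green_merge_word p 1 1) -filter_predI.
apply: eq_in_filter => y yW /=.
case: (boolP (is_green y)) => [green_y|]; last by rewrite andbT.
have : y \in greens r.
  by rewrite /greens -count_id_admissible -(filter_green_merge_word p 1 1) mem_filter green_y.
by move/not_P/negbTE ->.
Qed.

Lemma aword_insertion : aword A = map v W.
Proof. by rewrite /aword -map_flatten flatten_cut_after. Qed.

Lemma insertion_nonempty : [::] \notin A.
Proof.
apply/mapP => -[B B_cut /esym/eqP]; rewrite -size_eq0 size_map size_eq0 => /eqP B0.
by move: B_cut; rewrite B0 (negbTE (cut_after_nonempty _ _ _)).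
Qed.

Lemma block_ends_insertion : block_ends A = map v (greens r).
Proof.
have [w W_rcons] := insertion_word_rcons.
rewrite /block_ends /insertion_assemblee -map_comp.
rewrite (eq_in_map _ (v \o last (inl 0)) _).1; last first.
  case=> [|y B] B_cut /=; last by rewrite last_map.
  by move: (cut_after_nonempty is_green [::] W); rewrite B_cut.
rewrite map_comp W_rcons last_cut_after // -W_rcons.
by rewrite filter_green_merge_word count_id_admissible.
Qed.

Lemma bfirst_insertion : bfirst A = v (inl 1).
Proof.
rewrite /bfirst block_ends_insertion; apply/eqP; rewrite eqn_leq.
rewrite foldr_maxn_ub ?(map_f v (mem_greens_first r)) // andbT foldr_maxn_lub // all_map.
by apply/allP => y /(ivalue_green_bounds f_subexc) /andP [].
Qed.

Lemma blast_insertion : blast A = v (inl r.+1).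
Proof.
rewrite /blast bfirst_insertion block_ends_insertion; apply/eqP; rewrite eqn_leq.
rewrite foldr_minn_lb ?(map_f v (mem_greens_last r)) // andTb.
have bounds := ivalue_green_bounds f_subexc.
apply: foldr_minn_glb; first by have /andP [] := bounds _ (mem_greens_first r).
by rewrite all_map; apply/allP => y /bounds /andP [].
Qed.

End InsertionAssemblee.

Theorem mainTheorem2 (n r : nat) (f : nat -> nat) (p : seq bool) :
  r <= n -> trunc_subexc n r f -> admissible n r p ->
  size (lrs (rho (insertion_assemblee n r f p))) = w_alpha n r f /\
  size (rls (rho (insertion_assemblee n r f p))) = w_beta n r f.
Proof.
(* [r <= n] is implied by admissibility. *)
move=> _ f_subexc p_adm; have bounds := ivalue_green_bounds f_subexc.
split.
- rewrite size_lrs_rho ?insertion_nonempty // aword_insertion.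
  rewrite (bfirst_insertion f_subexc p_adm) filter_map (filter_insertion_word p_adm).
    by apply: nrecords_inserted => // j; apply: record_above_greens.
  by move=> y /bounds; rewrite /= -leqNgt => /andP [].
- rewrite size_rls_rho ?insertion_nonempty // aword_insertion.
  rewrite (blast_insertion f_subexc p_adm) filter_map (filter_insertion_word p_adm).
    by apply: nrecords_inserted => // j; apply: record_below_greens.
  by move=> y /bounds; rewrite /= -leqNgt => /andP [].
Qed.
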